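(* Let $A,B$ be partially ordered sets, let $G,G'$ be games over $A$, and let $H$ be a passable game over $B$. Then (a) $G\lhd G'$ implies $G+H\lhd G'+H$; and (b) $G\le G'$ implies $G+H\le G'+H$.
   Context: Games over a poset $A$ are defined inductively: for each $a\in A$ there is an atomic game $[a]$, which has no options; and if $L$ and $R$ are non-empty sets of games, then $\{L\mid R\}$ is a composite game with left options $L$ and right options $R$. The relations $\le$ and $\lhd$ are defined by simultaneous recursion: $G\le H$ iff (1) every left option $G^L$ of $G$ satisfies $G^L\lhd H$, (2) every right option $H^R$ of $H$ satisfies $G\lhd H^R$, and (3) if $G$ or $H$ is atomic then $G\lhd H$; and $G\lhd H$ iff (1) some right option $G^R$ of $G$ satisfies $G^R\le H$, or (2) some left option $H^L$ of $H$ satisfies $G\le H^L$, or (3) $G=[a]$, $H=[b]$ are atomic and $a\le b$. A game $G$ is passable if $G\lhd G$ and recursively all its options are passable. For a game $G$ over $A$ and $H$ over $B$, the sum $G+H$ is the game over $A\times B$ (with the componentwise order) defined recursively by $[a]+[b]=[(a,b)]$ when both are atomic, and otherwise $G+H=\{G^L+H,\,G+H^L\mid G^R+H,\,G+H^R\}$, where $G^L,G^R,H^L,H^R$ range over the left and right options of $G$ and $H$ (atomic games contributing no options). *)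

From HB Require Import structures.
From mathcomp Require Import all_boot all_order.
Set Implicit Arguments. Unset Strict Implicit. Unset Printing Implicit Defensive.

(* A game over A: either an atom [a], or {L | R} where the left (resp. right)
   options are given by a family indexed by a non-empty type. *)
Inductive game (A : Type) : Type :=
| Atom : A -> game A
| Comp : forall (IL : Type) (L : IL -> game A) (IR : Type) (R : IR -> game A),
    inhabited IL -> inhabited IR -> game A.

Arguments Atom {A} a.
Arguments Comp {A} IL L IR R _ _.

(* Simultaneous recursion: cmp r G H = (G <= H, G <| H), for the order r on atoms. *)
Fixpoint cmp (A : Type) (r : rel A) (G : game A) {struct G} : game A -> Prop * Prop :=
  fix cmpG (H : game A) {struct H} : Prop * Prop :=
  let lhd :=
    (match G with
     | Comp _ _ IR GR _ _ => exists j : IR, (cmp r (GR j) H).1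
     | Atom _ => False end)
    \/ (match H with
        | Comp IL HL _ _ _ _ => exists i : IL, (cmpG (HL i)).1
        | Atom _ => False end)
    \/ (match G, H with
        | Atom a, Atom b => r a b
        | _, _ => False end) in
  let le :=
    (match G with
     | Comp IL GL _ _ _ _ => forall i : IL, (cmp r (GL i) H).2
     | Atom _ => True end)
    /\ (match H with
        | Comp _ _ IR HR _ _ => forall j : IR, (cmpG (HR j)).2
        | Atom _ => True end)
    /\ ((match G with Atom _ => True | _ => False end
         \/ match H with Atom _ => True | _ => False end) -> lhd) in
  (le, lhd).

Definition game_le (A : Type) (r : rel A) (G H : game A) : Prop := (cmp r G H).1.
Definition game_lhd (A : Type) (r : rel A) (G H : game A) : Prop := (cmp r G H).2.

Fixpoint passable (A : Type) (r : rel A) (G : game A) : Prop :=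
  game_lhd r G G /\
  match G with
  | Atom _ => True
  | Comp _ L _ R _ _ => (forall i, passable r (L i)) /\ (forall j, passable r (R j))
  end.

Lemma inhabited_inl (X Y : Type) : inhabited X -> inhabited (X + Y).
Proof. by case=> x; constructor; left. Qed.

Fixpoint gsum (A B : Type) (G : game A) {struct G} : game B -> game (A * B) :=
  match G with
  | Atom a =>
      fix sH (H : game B) : game (A * B) :=
        match H with
        | Atom b => Atom (a, b)
        | Comp IL HL IR HR hl hr => Comp IL (fun i => sH (HL i)) IR (fun j => sH (HR j)) hl hr
        end
  | Comp GIL GL GIR GR gl gr =>
      fix sH (H : game B) : game (A * B) :=
        match H with
        | Atom b =>
            Comp GIL (fun i => gsum (GL i) (Atom b)) GIR (fun j => gsum (GR j) (Atom b)) gl gr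
        | Comp HIL HL HIR HR hl hr =>
            Comp (GIL + HIL)%type
              (fun s => match s with inl i => gsum (GL i) H | inr k => sH (HL k) end)
              (GIR + HIR)%type
              (fun s => match s with inl j => gsum (GR j) H | inr k => sH (HR k) end)
              (inhabited_inl HIL gl) (inhabited_inl HIR gr)
        end
  end.

Definition prod_le (dA dB : Order.disp_t) (A : porderType dA) (B : porderType dB) : rel (A * B) :=
  fun x y => ((x.1 <= y.1)%O && (x.2 <= y.2)%O).

From mathcomp Require Import all_boot all_order.
Set Implicit Arguments. Unset Strict Implicit. Unset Printing Implicit Defensive.

(* Induction on H, and inside it on the pair (G, G').  Options of G are handled
   by the induction on (G, G'); the left option G + H^L of G + H satisfies
   G + H^L <| G' + H because G + H^L <= G' + H^L by induction on H (this is
   where the options of H must be passable), and dually for right options.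
   H <| H itself is needed only when G = [a] and G' = [a'] are atoms: then
   [a] + H <| [a'] + H follows from H <| H by a separate induction on the
   pair of B-games, the atoms a <= a' being carried along unchanged.  Neither
   induction uses any property of the orders on A and B. *)

Section Options.
Variable X : Type.
Implicit Types (r : rel X) (G H x y : game X).

Definition left_opt G : game X -> Prop :=
  if G is Comp _ L _ _ _ _ then fun x => exists i, L i = x else fun _ => False.

Definition right_opt G : game X -> Prop :=
  if G is Comp _ _ _ R _ _ then fun x => exists j, R j = x else fun _ => False.

Definition is_atom G : Prop := if G is Atom _ then True else False.

Definition atom_rel r G H : Prop :=
  match G, H with Atom a, Atom b => r a b | _, _ => False end.

Lemma game_opt_ind (P : game X -> Prop) :
  (forall G, (forall x, left_opt G x -> P x) -> (forall x, right_opt G x -> P x) -> P G) ->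
  forall G, P G.
Proof.
move=> IH; elim=> [a | IL L IHL IR R IHR hl hr]; apply: IH => //= x.
- by case=> i <-.
- by case=> j <-.
Qed.

Lemma game_leE r G H :
  game_le r G H <->
  [/\ forall x, left_opt G x -> game_lhd r x H,
      forall y, right_opt H y -> game_lhd r G y
    & is_atom G \/ is_atom H -> game_lhd r G H].
Proof.
rewrite /game_le /game_lhd.
case: G => [a | ? ? ? ? ? ?]; case: H => [b | ? ? ? ? ? ?]; split.
all: try by case=> hL [hR hat]; split=> [x | y | at_GH];
  [case=> i <-; apply: hL | case=> j <-; apply: hR | exact: hat at_GH].
all: try by case=> hL hR hat; split; [|split=> [|/hat //]];
  do ?[done | move=> i; (apply: hL || apply: hR); exists i].
Qed.

Lemma game_lhdE r G H :
  game_lhd r G H <->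
  [\/ exists2 x, right_opt G x & game_le r x H,
      exists2 y, left_opt H y & game_le r G y
    | atom_rel r G H].
Proof.
rewrite /game_le /game_lhd.
case: G => [a | ? ? ? R ? ?]; case: H => [b | ? L ? ? ? ?]; split.
all: try by case=> [GR | [HL | h]];
  [case: GR => j h; constructor 1; exists (R j) => //; exists j
  | case: HL => i h; constructor 2; exists (L i) => //; exists i | constructor 3].
all: try by case=> [[x xR h] | [y yL h] | h];
  [case: xR => j jx; left; exists j; rewrite jx
  | case: yL => i iy; right; left; exists i; rewrite iy | right; right].
Qed.

Lemma lhd_right r G H x : right_opt G x -> game_le r x H -> game_lhd r G H.
Proof. by move=> Gx xH; apply/game_lhdE; constructor 1; exists x. Qed.

Lemma lhd_left r G H y : left_opt H y -> game_le r G y -> game_lhd r G H.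
Proof. by move=> Hy Gy; apply/game_lhdE; constructor 2; exists y. Qed.

Lemma lhd_atom r a b : r a b -> game_lhd r (Atom a) (Atom b).
Proof. by move=> rab; apply/game_lhdE; constructor 3. Qed.

Lemma passable_lhd r G : passable r G -> game_lhd r G G.
Proof. by case: G => [a | ? ? ? ? ? ?] []. Qed.

Lemma passable_left r G x : passable r G -> left_opt G x -> passable r x.
Proof. by case: G => [a | ? ? ? ? ? ?] [_ pG] //= [i <-]; apply: pG.1. Qed.

Lemma passable_right r G x : passable r G -> right_opt G x -> passable r x.
Proof. by case: G => [a | ? ? ? ? ? ?] [_ pG] //= [j <-]; apply: pG.2. Qed.

End Options.

Section SumOptions.
Variables A B : Type.
Implicit Types (G x : game A) (H y : game B) (z : game (A * B)).

Lemma left_opt_gsuml G H x : left_opt G x -> left_opt (gsum G H) (gsum x H).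
Proof.
by case: G => [a | ? ? ? ? ? ?] //= [i <-];
  case: H => [b | ? ? ? ? ? ?]; [exists i | exists (inl i)].
Qed.

Lemma left_opt_gsumr G H y : left_opt H y -> left_opt (gsum G H) (gsum G y).
Proof.
by case: H => [b | ? ? ? ? ? ?] //= [i <-];
  case: G => [a | ? ? ? ? ? ?]; [exists i | exists (inr i)].
Qed.

Lemma right_opt_gsuml G H x : right_opt G x -> right_opt (gsum G H) (gsum x H).
Proof.
by case: G => [a | ? ? ? ? ? ?] //= [i <-];
  case: H => [b | ? ? ? ? ? ?]; [exists i | exists (inl i)].
Qed.

Lemma right_opt_gsumr G H y : right_opt H y -> right_opt (gsum G H) (gsum G y).
Proof.
by case: H => [b | ? ? ? ? ? ?] //= [i <-];
  case: G => [a | ? ? ? ? ? ?]; [exists i | exists (inr i)].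
Qed.

Lemma left_opt_gsumP G H z : left_opt (gsum G H) z ->
  (exists2 x, left_opt G x & z = gsum x H) \/ (exists2 y, left_opt H y & z = gsum G y).
Proof.
case: G => [a | ? ? ? ? ? ?]; case: H => [b | ? ? ? ? ? ?] //= [s <-].
- by right; eexists; first exists s.
- by left; eexists; first exists s.
- by case: s => i; [left | right]; (eexists; first exists i).
Qed.

Lemma right_opt_gsumP G H z : right_opt (gsum G H) z ->
  (exists2 x, right_opt G x & z = gsum x H) \/ (exists2 y, right_opt H y & z = gsum G y).
Proof.
case: G => [a | ? ? ? ? ? ?]; case: H => [b | ? ? ? ? ? ?] //= [s <-].
- by right; eexists; first exists s.
- by left; eexists; first exists s.
- by case: s => i; [left | right]; (eexists; first exists i).
Qed.

Lemma is_atom_gsum G H : is_atom (gsum G H) -> is_atom G /\ is_atom H.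
Proof. by case: G => [a | ? ? ? ? ? ?]; case: H => [b | ? ? ? ? ? ?]. Qed.

End SumOptions.

Section Monotonicity.
Variables (A B : Type) (rA : rel A) (rB : rel B).

Definition prod_rel : rel (A * B) := fun x y => rA x.1 y.1 && rB x.2 y.2.
Local Notation rP := prod_rel.

Lemma gsum_atom_mono (a a' : A) : rA a a' -> forall K K' : game B,
  (game_lhd rB K K' -> game_lhd rP (gsum (Atom a) K) (gsum (Atom a') K')) /\
  (game_le rB K K' -> game_le rP (gsum (Atom a) K) (gsum (Atom a') K')).
Proof.
move=> raa; elim/game_opt_ind=> K IHKl IHKr; elim/game_opt_ind=> K' IHK'l IHK'r.
have lhd_sum : game_lhd rB K K' -> game_lhd rP (gsum (Atom a) K) (gsum (Atom a') K').
  case/game_lhdE=> [[x Kx xK'] | [y K'y Ky] | atK].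
  - exact: lhd_right (right_opt_gsumr _ Kx) ((IHKr x Kx K').2 xK').
  - exact: lhd_left (left_opt_gsumr _ K'y) ((IHK'l y K'y).2 Ky).
  - case: K K' atK {IHKl IHKr IHK'l IHK'r} => [b | ? ? ? ? ? ?] [b' | ? ? ? ? ? ?] // rbb.
    by apply: lhd_atom; apply/andP.
split; first exact: lhd_sum.
move=> /game_leE [Kl K'r atK]; apply/game_leE; split=> [z | z | at_sum].
- by case/left_opt_gsumP=> [[x []] | [y Ky ->]]; exact: (IHKl y Ky K').1 (Kl y Ky).
- by case/right_opt_gsumP=> [[x []] | [y K'y ->]]; exact: (IHK'r y K'y).1 (K'r y K'y).
- by apply/lhd_sum/atK; case: at_sum => /is_atom_gsum [_ ?]; [left | right].
Qed.

Definition gsum_monotone (H : game B) : Prop := forall G G' : game A,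
  (game_lhd rA G G' -> game_lhd rP (gsum G H) (gsum G' H)) /\
  (game_le rA G G' -> game_le rP (gsum G H) (gsum G' H)).

Lemma passable_gsum_monotone H : passable rB H -> gsum_monotone H.
Proof.
elim/game_opt_ind: H => H IHl IHr pH.
have monoL y : left_opt H y -> gsum_monotone y by move=> Hy; apply/IHl/(passable_left pH).
have monoR y : right_opt H y -> gsum_monotone y by move=> Hy; apply/IHr/(passable_right pH).
elim/game_opt_ind=> G IHGl IHGr; elim/game_opt_ind=> G' IHG'l IHG'r.
have lhd_sum : game_lhd rA G G' -> game_lhd rP (gsum G H) (gsum G' H).
  case/game_lhdE=> [[x Gx xG'] | [y G'y Gy] | atG].
  - exact: lhd_right (right_opt_gsuml _ Gx) ((IHGr x Gx G').2 xG').
  - exact: lhd_left (left_opt_gsuml _ G'y) ((IHG'l y G'y).2 Gy).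
  - case: G G' atG {IHGl IHGr IHG'l IHG'r} => [a | ? ? ? ? ? ?] [a' | ? ? ? ? ? ?] // raa.
    exact: (gsum_atom_mono raa H H).1 (passable_lhd pH).
split; first exact: lhd_sum.
move=> GG'; have /game_leE [Gl G'r atG] := GG'.
apply/game_leE; split=> [z | z | at_sum].
- case/left_opt_gsumP=> [[x Gx ->] | [y Hy ->]].
  + exact: (IHGl x Gx G').1 (Gl x Gx).
  + exact: lhd_left (left_opt_gsumr _ Hy) ((monoL y Hy G G').2 GG').
- case/right_opt_gsumP=> [[x G'x ->] | [y Hy ->]].
  + exact: (IHG'r x G'x).1 (G'r x G'x).
  + exact: lhd_right (right_opt_gsumr _ Hy) ((monoR y Hy G G').2 GG').
- by apply/lhd_sum/atG; case: at_sum => /is_atom_gsum [? _]; [left | right].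
Qed.

End Monotonicity.

Theorem proposition8p4 (dA dB : Order.disp_t) (A : porderType dA) (B : porderType dB)
  (G G' : game A) (H : game B) :
  passable (<=%O : rel B) H ->
  (game_lhd (<=%O : rel A) G G' -> game_lhd (@prod_le _ _ A B) (gsum G H) (gsum G' H)) /\
  (game_le (<=%O : rel A) G G' -> game_le (@prod_le _ _ A B) (gsum G H) (gsum G' H)).
Proof. by move=> pH; apply: (passable_gsum_monotone (<=%O : rel A) pH). Qed.
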